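(* Let $u_1^\star,\dots,u_r^\star\in\mathbb{R}^n$ be nonzero and pairwise orthogonal, let $T^\star=\sum_{i=1}^r u_i^\star\otimes u_i^\star\otimes u_i^\star$, and let $g:\mathbb{R}^n\to\mathbb{R}$, $g(u)=\|u\otimes u\otimes u-T^\star\|_F^2$. Then every critical point $\hat u$ of $g$ lies in $\mathrm{span}\{u_1^\star,\dots,u_r^\star\}$. Let $s(\hat u)=\#\{i\in[r]:\langle\hat u,u_i^\star\rangle\neq0\}$. Then: (1) if $s(\hat u)=0$, then $\hat u=0$, and $0$ is a third-order saddle point: $\nabla g(0)=0$, $\nabla^2 g(0)=0$ and $\nabla^3 g(0)\neq0$; (2) if $s(\hat u)=1$, then $\hat u=u_i^\star$ for some $i\in[r]$; moreover each $u_i^\star$ is a critical point with $\nabla^2 g(u_i^\star)$ positive definite, hence a strict local minimum; (3) if $s(\hat u)\ge2$, then $\nabla^2 g(\hat u)$ has a negative eigenvalue (strict saddle point).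
   Context: $(a\otimes b\otimes c)_{ijk}=a_ib_jc_k$; $\|\cdot\|_F$ is the entrywise Euclidean (Frobenius) norm of a tensor. A critical point of $g$ is a point where $\nabla g=0$; $\nabla^2 g$ and $\nabla^3 g$ denote the Hessian and third derivative tensor. *)

From HB Require Import structures.
From mathcomp Require Import all_boot all_order all_algebra.
From mathcomp Require Import all_classical all_reals all_analysis.
Set Implicit Arguments. Unset Strict Implicit. Unset Printing Implicit Defensive.
Import Order.TTheory GRing.Theory Num.Theory.
Import numFieldNormedType.Exports.
Local Open Scope ring_scope.

Section Defs.
Variables (R : realType) (n : nat).

Definition dotv (u v : 'rV[R]_n) : R := \sum_(i < n) u 0 i * v 0 i.

Definition ebasis (i : 'I_n) : 'rV[R]_n := delta_mx 0 i.

Definition tensor3 := 'I_n -> 'I_n -> 'I_n -> R.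

Definition outer3 (a b c : 'rV[R]_n) : tensor3 :=
  fun i j k => a 0 i * b 0 j * c 0 k.

Definition frob2 (T : tensor3) : R :=
  \sum_(i < n) \sum_(j < n) \sum_(k < n) (T i j k) ^+ 2.

Definition Tstar r (us : 'I_r -> 'rV[R]_n) : tensor3 :=
  fun i j k => \sum_(l < r) outer3 (us l) (us l) (us l) i j k.

Definition gobj r (us : 'I_r -> 'rV[R]_n) (u : 'rV[R]_n) : R :=
  frob2 (fun i j k => outer3 u u u i j k - Tstar us i j k).

Definition partial (f : 'rV[R]_n -> R) (i : 'I_n) : 'rV[R]_n -> R :=
  fun x => derive f x (ebasis i).

Definition grad (f : 'rV[R]_n -> R) (u : 'rV[R]_n) : 'rV[R]_n :=
  \row_i partial f i u.

Definition hessian (f : 'rV[R]_n -> R) (u : 'rV[R]_n) : 'M[R]_n :=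
  \matrix_(i, j) partial (partial f j) i u.

Definition deriv3 (f : 'rV[R]_n -> R) (u : 'rV[R]_n) : tensor3 :=
  fun i j k => partial (partial (partial f k) j) i u.

Definition critical (f : 'rV[R]_n -> R) (u : 'rV[R]_n) : Prop := grad f u = 0.

Definition posdef (H : 'M[R]_n) : Prop :=
  forall v : 'rV[R]_n, v != 0 -> 0 < (v *m H *m v^T) 0 0.

Definition strict_local_min (f : 'rV[R]_n -> R) (u : 'rV[R]_n) : Prop :=
  \forall v \near u, v != u -> f u < f v.

Definition in_span r (us : 'I_r -> 'rV[R]_n) (u : 'rV[R]_n) : Prop :=
  exists c : 'I_r -> R, u = \sum_(l < r) c l *: us l.

Definition supp_count r (us : 'I_r -> 'rV[R]_n) (u : 'rV[R]_n) : nat :=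
  #|[set l : 'I_r | dotv u (us l) != 0]|.

End Defs.

From HB Require Import structures.
From mathcomp Require Import all_boot all_order all_algebra.
From mathcomp Require Import all_classical all_reals all_analysis.
From mathcomp Require Import ring lra.
Import Order.TTheory GRing.Theory Num.Theory.
Import numFieldNormedType.Exports.
Local Open Scope ring_scope.

Set Implicit Arguments. Unset Strict Implicit. Unset Printing Implicit Defensive.

(* Expanding the Frobenius norm, g u = |u|^6 - 2 \sum_l <u, u_l>^3 + |T*|^2, whose
   gradient is 6 (|u|^4 u - \sum_l <u, u_l>^2 u_l) and whose Hessian acts by
     v |-> 24 |u|^2 <u, v> u + 6 |u|^4 v - 12 \sum_l <u, u_l> <v, u_l> u_l.
   At a critical point |u|^4 u is a combination of the u_l.  If only c = <u, u_m> is
   nonzero, pairing with u gives |u|^6 = c^3, so |u|^2 = c and u = u_m.  If c_a and c_b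
   are nonzero, v = c_b u_a - c_a u_b is orthogonal to u and, the u_l being orthogonal,
   an eigenvector of the Hessian for the eigenvalue -6 |u|^4.  At 0 the gradient and
   the Hessian vanish while the third derivative is -12 T*.  Near u_m, writing
   u = s u_m + w with w orthogonal to u_m, g u - g u_m is |u_m|^6 (s^3 - 1)^2 plus a
   term quadratic in w that dominates the cubic contributions of the other u_l. *)

Lemma exprn_odd_inj (R : realDomainType) k (x y : R) :
  odd k -> x ^+ k = y ^+ k -> x = y.
Proof.
move=> ok; wlog x0 : x y / 0 <= x => [hw|xy].
  have [x0|x0] := lerP 0 x; first exact: hw.
  move=> xy; apply: oppr_inj; apply: hw; first by rewrite oppr_ge0 ltW.
  by rewrite exprNn [RHS]exprNn xy.
have y0 : 0 <= y by rewrite -(exprn_odd_ge0 _ ok) -xy exprn_odd_ge0.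
by apply/eqP; rewrite -(eqrXn2 (odd_gt0 ok) x0 y0) xy.
Qed.

Lemma sum_only_at (W : nmodType) (I : finType) (F : I -> W) m :
  (forall l, l != m -> F l = 0) -> \sum_l F l = F m.
Proof. by move=> F0; rewrite (bigD1 m) //= big1 ?addr0 // => l /F0. Qed.

Arguments sum_only_at {W I F} m.

Lemma sum_cube_le (R : realDomainType) (I : finType) (P : pred I) (x : I -> R) eta :
  (forall i, P i -> `|x i| <= eta) ->
  \sum_(i | P i) x i ^+ 3 <= eta * \sum_(i | P i) x i ^+ 2.
Proof.
move=> xle; rewrite mulr_sumr; apply: ler_sum => i Pi.
rewrite exprSr mulrC; apply: le_trans (ler_wpM2r (sqr_ge0 _) (xle i Pi)).
by rewrite ler_wpM2r ?sqr_ge0 ?ler_norm.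
Qed.

Section InnerProduct.
Variables (R : realType) (n : nat).
Local Notation V := 'rV[R]_n.
Local Notation dot := (@dotv R n).
Implicit Types (u v w : V) (a : R).

Lemma dotvC u v : dot u v = dot v u.
Proof. by apply: eq_bigr => i _; rewrite mulrC. Qed.

Lemma dotvDl u v w : dot (u + v) w = dot u w + dot v w.
Proof. by rewrite /dotv -big_split; apply: eq_bigr => i _; rewrite mxE mulrDl. Qed.

Lemma dotvZl a u w : dot (a *: u) w = a * dot u w.
Proof. by rewrite /dotv mulr_sumr; apply: eq_bigr => i _; rewrite mxE mulrA. Qed.

Lemma dotvBl u v w : dot (u - v) w = dot u w - dot v w.
Proof. by rewrite dotvDl -scaleN1r dotvZl mulN1r. Qed.

Lemma dotv0l w : dot 0 w = 0.
Proof. by rewrite -(scale0r 0) dotvZl mul0r. Qed.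

Lemma dotv_suml r (F : 'I_r -> V) w :
  dot (\sum_(l < r) F l) w = \sum_(l < r) dot (F l) w.
Proof. exact: (big_morph (fun x => dot x w) (fun x y => dotvDl x y w) (dotv0l w)). Qed.

Lemma dotvDr u v w : dot w (u + v) = dot w u + dot w v.
Proof. by rewrite !(dotvC w) dotvDl. Qed.

Lemma dotvZr a u w : dot w (a *: u) = a * dot w u.
Proof. by rewrite !(dotvC w) dotvZl. Qed.

Lemma dotvBr u v w : dot w (u - v) = dot w u - dot w v.
Proof. by rewrite !(dotvC w) dotvBl. Qed.

Lemma dotv_ebasisr u i : dot u (ebasis R i) = u 0 i.
Proof.
rewrite /dotv (bigD1 i) //= big1 ?addr0 => [|j ji]; first by rewrite mxE !eqxx mulr1.
by rewrite mxE (negbTE ji) andbF mulr0.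
Qed.

Lemma dotv_ebasisl u i : dot (ebasis R i) u = u 0 i.
Proof. by rewrite dotvC dotv_ebasisr. Qed.

Lemma dotvv_ge0 u : 0 <= dot u u.
Proof. by apply: sumr_ge0 => i _; rewrite -expr2 sqr_ge0. Qed.

Lemma dotvv_eq0 u : (dot u u == 0) = (u == 0).
Proof.
apply/idP/eqP => [|->]; last by rewrite dotv0l.
rewrite psumr_eq0 => [/allP u0|i _]; last by rewrite -expr2 sqr_ge0.
apply/rowP => i; rewrite mxE; apply/eqP.
by have /implyP/(_ isT) := u0 i (mem_index_enum i); rewrite mulf_eq0 orbb.
Qed.

Lemma dotvv_gt0 u : u != 0 -> 0 < dot u u.
Proof. by move=> u0; rewrite lt0r dotvv_eq0 u0 dotvv_ge0. Qed.

Lemma cauchy_schwarz_dotv u v : dot u v ^+ 2 <= dot u u * dot v v.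
Proof.
have [->|v0] := eqVneq v 0; first by rewrite (dotvC u) !dotv0l expr0n mulr0.
set a := dot u v; set b := dot v v.
have := dotvv_ge0 (b *: u - a *: v).
rewrite !(dotvBl, dotvBr, dotvZl, dotvZr) -/a -/b (dotvC v u) -/a.
have -> : b * (b * dot u u - a * a) - a * (b * a - a * b) = b * (b * dot u u - a ^+ 2)
  by ring.
by rewrite pmulr_rge0 ?dotvv_gt0 // subr_ge0 mulrC.
Qed.

Lemma dotv_mulmx_tr u v : (u *m v^T) 0 0 = dot u v.
Proof. by rewrite mxE; apply: eq_bigr => i _; rewrite mxE. Qed.

End InnerProduct.

Section Tensors.
Variables (R : realType) (n : nat).
Local Notation V := 'rV[R]_n.
Local Notation dot := (@dotv R n).
Local Notation tensor := (tensor3 R n).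

Definition tdot (T S : tensor) : R :=
  \sum_(i < n) \sum_(j < n) \sum_(k < n) T i j k * S i j k.

Lemma frob2B (T S : tensor) :
  frob2 (fun i j k => T i j k - S i j k) = frob2 T - 2 * tdot T S + frob2 S.
Proof.
have sumE (F G H : 'I_n -> R) : \sum_(i < n) (F i - 2 * G i + H i) =
    \sum_(i < n) F i - 2 * \sum_(i < n) G i + \sum_(i < n) H i.
  by rewrite big_split sumrB mulr_sumr.
rewrite /frob2 /tdot -sumE; apply: eq_bigr => i _; rewrite -sumE.
apply: eq_bigr => j _; rewrite -sumE; apply: eq_bigr => k _; ring.
Qed.

Lemma tdot_outer3 (a b c x y z : V) :
  tdot (outer3 a b c) (outer3 x y z) = dot a x * dot b y * dot c z.
Proof.
rewrite /tdot /dotv !mulr_suml; apply: eq_bigr => i _.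
rewrite -mulrA mulr_suml mulr_sumr; apply: eq_bigr => j _.
rewrite !mulr_sumr; apply: eq_bigr => k _; rewrite /outer3; ring.
Qed.

Lemma tdot_sumr r (T : tensor) (F : 'I_r -> tensor) :
  tdot T (fun i j k => \sum_(l < r) F l i j k) = \sum_(l < r) tdot T (F l).
Proof.
rewrite /tdot; under eq_bigr => i _ do under eq_bigr => j _ do
  under eq_bigr => k _ do rewrite mulr_sumr.
under eq_bigr => i _ do under eq_bigr => j _ do rewrite exchange_big.
by under eq_bigr => i _ do rewrite exchange_big; rewrite exchange_big.
Qed.

Lemma gobjE r (us : 'I_r -> V) u :
  gobj us u = dot u u ^+ 3 - 2 * \sum_(l < r) dot u (us l) ^+ 3 + frob2 (Tstar us).
Proof.
have frob2E (T : tensor) : frob2 T = tdot T T.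
  by do 3![apply: eq_bigr => ? _]; rewrite expr2.
rewrite /gobj frob2B [frob2 (outer3 _ _ _)]frob2E tdot_outer3 tdot_sumr.
congr (_ - 2 * _ + _); last apply: eq_bigr => l _; rewrite ?tdot_outer3.
all: by rewrite -expr2 -exprSr.
Qed.

End Tensors.

(* The library's [is_derive] instances are stated on the function algebra
   ([f + g], [f * g], ...); these pointwise forms let derivatives of lambda terms be
   assembled forward, without instance search choosing the shape of the result. *)
Section PointwiseDerive.
Variables (R : numFieldType) (V : normedModType R).
Implicit Types (f g : V -> R) (x v : V) (df dg : R).

Lemma is_derive_const (c : R) x v : is_derive x v (fun _ => c) 0.
Proof. exact: is_derive_cst. Qed.

Lemma is_derive_add f g x v df dg : is_derive x v f df -> is_derive x v g dg ->
  is_derive x v (fun y => f y + g y) (df + dg).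
Proof. by move=> Df Dg; exact: (is_deriveD Df Dg). Qed.

Lemma is_derive_sub f g x v df dg : is_derive x v f df -> is_derive x v g dg ->
  is_derive x v (fun y => f y - g y) (df - dg).
Proof. by move=> Df Dg; exact: (is_deriveB Df Dg). Qed.

Lemma is_derive_mul f g x v df dg : is_derive x v f df -> is_derive x v g dg ->
  is_derive x v (fun y => f y * g y) (f x * dg + g x * df).
Proof. by move=> Df Dg; exact: (is_deriveM Df Dg). Qed.

Lemma is_derive_scale (k : R) f x v df : is_derive x v f df ->
  is_derive x v (fun y => k * f y) (k * df).
Proof. by move=> Df; exact: (is_deriveZ k Df). Qed.

Lemma is_derive_pow f (m : nat) x v df : is_derive x v f df ->
  is_derive x v (fun y => f y ^+ m) (m%:R * f x ^+ m.-1 * df).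
Proof.
move=> Df; have -> : (fun y => f y ^+ m) = f ^+ m by apply/funext => y; rewrite exprfctE.
exact: is_deriveX.
Qed.

Lemma is_derive_bigsum r (h : 'I_r -> V -> R) x v (dh : 'I_r -> R) :
  (forall l, is_derive x v (h l) (dh l)) ->
  is_derive x v (fun y => \sum_(l < r) h l y) (\sum_(l < r) dh l).
Proof.
move=> Dh; have -> : (fun y => \sum_(l < r) h l y) = \sum_(l < r) h l.
  by apply/funext => y; rewrite fct_sumE.
exact: is_derive_sum.
Qed.

End PointwiseDerive.

Arguments is_derive_const {R V} c x v.
Arguments is_derive_scale {R V} k {f x v df}.
Arguments is_derive_pow {R V f} m {x v df}.

Section DotDerive.
Variables (R : realType) (n : nat).
Local Notation V := 'rV[R]_n.
Local Notation dot := (@dotv R n).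
Implicit Types (x v w : V).

Lemma is_derive_coord i x v : is_derive x v (fun y : V => y 0 i) (v 0 i).
Proof.
apply: DeriveDef; first exact/diff_derivable/differentiable_coord.
rewrite deriveE; last exact: differentiable_coord.
have @f : {linear V -> R}.
  by exists (fun N : V => N 0 i); do 2![eexists]; do ?[constructor];
     rewrite ?mxE// => ? *; rewrite ?mxE//; move=> ?; rewrite !mxE.
by rewrite (_ : (fun _ => _) = f) // diff_lin //; apply: coord_continuous.
Qed.

Lemma is_derive_dotvl w x v : is_derive x v (fun y => dot y w) (dot v w).
Proof.
have D := is_derive_bigsum (fun i =>
  is_derive_mul (is_derive_coord i x v) (is_derive_const (w 0 i) x v)).
apply: is_derive_eq D _.
by apply: eq_bigr => i _; rewrite mulr0 add0r mulrC.
Qed.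

Lemma is_derive_dotvv x v : is_derive x v (fun y => dot y y) (2 * dot x v).
Proof.
have D := is_derive_bigsum (fun i =>
  is_derive_mul (is_derive_coord i x v) (is_derive_coord i x v)).
apply: is_derive_eq D _.
by rewrite /dotv mulr_sumr; apply: eq_bigr => i _; ring.
Qed.

End DotDerive.

Section Objective.
Variables (R : realType) (n r : nat) (us : 'I_r -> 'rV[R]_n).
Local Notation V := 'rV[R]_n.
Local Notation dot := (@dotv R n).
Local Notation e := (@ebasis R n).
Implicit Types (u v w x y : V).

Definition coef_us l u := dot u (us l).

Definition g_poly u :=
  dot u u ^+ 3 - 2 * \sum_(l < r) coef_us l u ^+ 3 + frob2 (Tstar us).

Definition grad_g u : V :=
  6 *: (dot u u ^+ 2 *: u - \sum_(l < r) coef_us l u ^+ 2 *: us l).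

Definition hess_g u v : V :=
  (24 * dot u u * dot u v) *: u + (6 * dot u u ^+ 2) *: v
  - 12 *: \sum_(l < r) (coef_us l u * dot v (us l)) *: us l.

Lemma gobj_poly : gobj us = g_poly.
Proof. by apply/funext => u; rewrite gobjE. Qed.

Lemma dot_grad_g u w : dot (grad_g u) w =
  6 * dot u u ^+ 2 * dot u w - 6 * \sum_(l < r) coef_us l u ^+ 2 * dot (us l) w.
Proof.
rewrite /grad_g dotvZl dotvBl dotvZl dotv_suml mulrBr mulrA; congr (_ - 6 * _).
by apply: eq_bigr => l _; rewrite dotvZl.
Qed.

Lemma dot_hess_g u v w : dot (hess_g u v) w =
  24 * dot u u * dot u v * dot u w + 6 * dot u u ^+ 2 * dot v w
  - 12 * \sum_(l < r) coef_us l u * dot v (us l) * dot (us l) w.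
Proof.
rewrite /hess_g dotvBl dotvDl !dotvZl dotv_suml; congr (_ - 12 * _).
by apply: eq_bigr => l _; rewrite dotvZl.
Qed.

Lemma dot_hess_gC u v w : dot (hess_g u v) w = dot (hess_g u w) v.
Proof.
rewrite !dot_hess_g (dotvC v w); congr (_ + _ - 12 * _); first ring.
by apply: eq_bigr => l _; rewrite (dotvC (us l)) (dotvC (us l) v); ring.
Qed.

Lemma is_derive_g_poly x v : is_derive x v g_poly (dot (grad_g x) v).
Proof.
have Dc l := is_derive_pow 3 (is_derive_dotvl (us l) x v).
have D := is_derive_add (is_derive_sub (is_derive_pow 3 (is_derive_dotvv x v))
  (is_derive_scale 2 (is_derive_bigsum Dc))) (is_derive_const (frob2 (Tstar us)) x v).
apply: is_derive_eq D _.
rewrite dot_grad_g addr0 [2 * \sum_(l < r) _]mulr_sumr [6 * \sum_(l < r) _]mulr_sumr.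
congr (_ - _); first by rewrite /=; ring.
by apply: eq_bigr => l _; rewrite (dotvC (us l)) /coef_us /=; ring.
Qed.

Lemma is_derive_dot_grad_g w x v :
  is_derive x v (fun y => dot (grad_g y) w) (dot (hess_g x v) w).
Proof.
have Dc l := is_derive_mul (is_derive_pow 2 (is_derive_dotvl (us l) x v))
  (is_derive_const (dot (us l) w) x v).
have D := is_derive_sub
  (is_derive_mul (is_derive_scale 6 (is_derive_pow 2 (is_derive_dotvv x v)))
                 (is_derive_dotvl w x v))
  (is_derive_scale 6 (is_derive_bigsum Dc)).
under [fun y => _]funext => y do rewrite dot_grad_g.
apply: is_derive_eq D _.
rewrite dot_hess_g [6 * \sum_(l < r) _]mulr_sumr [12 * _]mulr_sumr.
congr (_ - _); first by rewrite /=; ring.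
by apply: eq_bigr => l _; rewrite /coef_us /=; ring.
Qed.

Lemma partial_g_poly j : partial g_poly j = fun u => dot (grad_g u) (e j).
Proof.
by apply/funext => u; have D := is_derive_g_poly u (e j); rewrite /partial derive_val.
Qed.

Lemma grad_g_polyE u : grad g_poly u = grad_g u.
Proof. by apply/rowP => j; rewrite mxE partial_g_poly dotv_ebasisr. Qed.

Lemma partial2_g_poly i j :
  partial (partial g_poly j) i = fun u => dot (hess_g u (e i)) (e j).
Proof.
apply/funext => u; have D := is_derive_dot_grad_g (e j) u (e i).
by rewrite partial_g_poly /partial derive_val.
Qed.

Lemma hessian_g_polyE u i j : hessian g_poly u i j = dot (hess_g u (e i)) (e j).
Proof. by rewrite mxE partial2_g_poly. Qed.

Lemma mulmx_hessian_g_poly v u : v *m hessian g_poly u = hess_g u v.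
Proof.
apply/rowP => j; rewrite [LHS]mxE.
under eq_bigr => i _ do rewrite hessian_g_polyE dot_hess_gC dotv_ebasisr.
by rewrite -[LHS]/(dot v (hess_g u (e j))) dotvC dot_hess_gC dotv_ebasisr.
Qed.

Lemma is_derive0_dot_hess_g v w y : is_derive 0 y (fun x => dot (hess_g x v) w)
  (- 12 * \sum_(l < r) dot y (us l) * dot v (us l) * dot (us l) w).
Proof.
have Dc l := is_derive_mul (is_derive_mul (is_derive_dotvl (us l) 0 y)
  (is_derive_const (dot v (us l)) 0 y)) (is_derive_const (dot (us l) w) 0 y).
have D := is_derive_sub (is_derive_add
  (is_derive_mul (is_derive_mul (is_derive_scale 24 (is_derive_dotvv 0 y))
     (is_derive_dotvl v 0 y)) (is_derive_dotvl w 0 y))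
  (is_derive_mul (is_derive_scale 6 (is_derive_pow 2 (is_derive_dotvv 0 y)))
     (is_derive_const (dot v w) 0 y)))
  (is_derive_scale 12 (is_derive_bigsum Dc)).
under [fun x => _]funext => x do rewrite dot_hess_g.
apply: is_derive_eq D _.
rewrite !dotv0l /= (eq_bigr (fun l => dot y (us l) * dot v (us l) * dot (us l) w)).
  by ring.
by move=> l _; rewrite dotv0l; ring.
Qed.

Lemma deriv3_g_poly0 i j k : deriv3 g_poly 0 i j k = - 12 * Tstar us i j k.
Proof.
have D := is_derive0_dot_hess_g (e j) (e k) (e i).
rewrite /deriv3 partial2_g_poly /partial derive_val; congr (_ * _).
by apply: eq_bigr => l _; rewrite dotv_ebasisl dotv_ebasisr !dotv_ebasisl.
Qed.

Lemma grad_g0 : grad_g 0 = 0.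
Proof.
rewrite /grad_g big1 => [|l _]; last by rewrite /coef_us dotv0l expr2 mul0r scale0r.
by rewrite scaler0 subrr scaler0.
Qed.

Lemma hess_g0 v : hess_g 0 v = 0.
Proof.
rewrite /hess_g big1 => [|l _]; last by rewrite /coef_us dotv0l mul0r scale0r.
by rewrite dotv0l expr2 !(mulr0, mul0r, scaler0, scale0r) !addr0 subr0.
Qed.

Lemma hessian_g_poly0 : hessian g_poly 0 = 0.
Proof. by apply/matrixP => i j; rewrite hessian_g_polyE hess_g0 dotv0l mxE. Qed.

End Objective.

Section SupportCount.
Variables (R : realType) (n r : nat) (us : 'I_r -> 'rV[R]_n) (u : 'rV[R]_n).
Local Notation c l := (coef_us us l u).

Lemma supp_count_eq0 : supp_count us u = 0%N -> forall l, c l = 0.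
Proof.
move=> /eqP; rewrite cards_eq0 => /eqP S0 l; apply/eqP.
have : l \notin [set l | c l != 0] by rewrite S0 inE.
by rewrite inE negbK.
Qed.

Lemma supp_count_eq1 : supp_count us u = 1%N ->
  exists2 m, c m != 0 & forall l, l != m -> c l = 0.
Proof.
move=> /eqP/cards1P [m S1]; exists m => [|l lm].
  have : m \in [set l | c l != 0] by rewrite S1 inE.
  by rewrite inE.
have : l \notin [set l | c l != 0] by rewrite S1 inE.
by rewrite inE negbK => /eqP.
Qed.

Lemma supp_count_ge2 : (2 <= supp_count us u)%N ->
  exists a b, [/\ a != b, c a != 0 & c b != 0].
Proof. by move=> /card_gt1P [a [b [+ + ab]]]; rewrite !inE => ca cb; exists a, b. Qed.

End SupportCount.

Section CriticalPoints.
Variables (R : realType) (n r : nat) (us : 'I_r -> 'rV[R]_n).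
Local Notation V := 'rV[R]_n.
Local Notation dot := (@dotv R n).
Local Notation c := (coef_us us).
Implicit Types (u v w : V).

Lemma grad_g_eq0 u : grad_g us u = 0 ->
  dot u u ^+ 2 *: u = \sum_(l < r) c l u ^+ 2 *: us l.
Proof. by move=> /eqP; rewrite scaler_eq0 pnatr_eq0 /= subr_eq0 => /eqP. Qed.

Lemma critical_in_span u : grad_g us u = 0 -> in_span us u.
Proof.
move=> /grad_g_eq0 E; have [u0|u0] := eqVneq u 0.
  by exists (fun _ => 0); rewrite u0 big1 // => l _; rewrite scale0r.
have N0 : dot u u ^+ 2 != 0 by rewrite expf_neq0 // dotvv_eq0.
exists (fun l => (dot u u ^+ 2)^-1 * c l u ^+ 2).
rewrite -[LHS](scalerK N0) E scaler_sumr.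
by apply: eq_bigr => l _; rewrite scalerA.
Qed.

Lemma critical_supp_count0 u : grad_g us u = 0 -> supp_count us u = 0%N -> u = 0.
Proof.
move=> /grad_g_eq0 + /supp_count_eq0 c0.
rewrite big1 => [/eqP|l _]; last by rewrite c0 expr0n scale0r.
by rewrite scaler_eq0 expf_eq0 /= dotvv_eq0 orbb => /eqP.
Qed.

Lemma critical_supp_count1 u : grad_g us u = 0 -> supp_count us u = 1%N ->
  exists l, u = us l.
Proof.
move=> /grad_g_eq0 E /supp_count_eq1 [m cm c0]; exists m.
rewrite (sum_only_at m) in E; last by move=> l /c0 ->; rewrite expr0n scale0r.
have E3 : dot u u ^+ 3 = c m u ^+ 3.
  have := congr1 (dot^~ u) E; rewrite !dotvZl (dotvC (us m)) -/(c m u) => E'.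
  by rewrite exprS mulrC E' -exprSr.
have Nc : dot u u = c m u by exact: exprn_odd_inj E3.
have N0 : dot u u ^+ 2 != 0 by rewrite Nc expf_neq0.
by rewrite -[LHS](scalerK N0) E -Nc scalerK.
Qed.

Hypothesis us_orth : forall l m, l != m -> dot (us l) (us m) = 0.

Lemma coef_us_us m l : l != m -> c l (us m) = 0.
Proof. by move=> lm; rewrite /coef_us us_orth // eq_sym. Qed.

Lemma dot_sum_us (a : 'I_r -> R) m :
  dot (\sum_(l < r) a l *: us l) (us m) = a m * dot (us m) (us m).
Proof.
rewrite dotv_suml (sum_only_at m) ?dotvZl // => l lm.
by rewrite dotvZl us_orth // mulr0.
Qed.

Lemma critical_us m : grad_g us (us m) = 0.
Proof.
rewrite /grad_g (sum_only_at m) => [|l lm]; last by rewrite coef_us_us // expr0n scale0r.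
by rewrite /coef_us subrr scaler0.
Qed.

Lemma posdef_hessian_us m : us m != 0 -> posdef (hessian (g_poly us) (us m)).
Proof.
move=> um0 v v0; rewrite dotv_mulmx_tr mulmx_hessian_g_poly dot_hess_g.
rewrite (sum_only_at m) => [|l lm]; last by rewrite coef_us_us // !mul0r.
have A0 := dotvv_gt0 um0; have b0 := dotvv_gt0 v0.
rewrite /coef_us (dotvC v (us m)).
set A := dot (us m) (us m); set d := dot (us m) v; set b := dot v v.
have -> : 24 * A * d * d + 6 * A ^+ 2 * b - 12 * (A * d * d) =
  12 * A * d ^+ 2 + 6 * A ^+ 2 * b by ring.
have : 0 <= A * d ^+ 2 by rewrite mulr_ge0 ?sqr_ge0 ?ltW.
have : 0 < A ^+ 2 * b by rewrite mulr_gt0 ?exprn_gt0.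
lra.
Qed.

Lemma hess_g_saddle_direction u a b : grad_g us u = 0 -> us a != 0 -> a != b ->
  c a u != 0 -> c b u != 0 ->
  let v := c b u *: us a - c a u *: us b in
  v != 0 /\ hess_g us u v = (- 6 * dot u u ^+ 2) *: v.
Proof.
move=> /grad_g_eq0 E ua0 ab ca cb v.
have Ec m : c m u != 0 -> c m u * dot (us m) (us m) = dot u u ^+ 2.
  move=> cm; apply: (mulfI cm); rewrite mulrA -expr2.
  have := congr1 (dot^~ (us m)) E; rewrite /= dotvZl dot_sum_us => <-.
  by rewrite mulrC.
split.
  apply: contraNneq ua0 => v0; rewrite -dotvv_eq0.
  have := congr1 (dot^~ (us a)) v0; rewrite /= dotv0l /v dotvBl !dotvZl.
  rewrite (@us_orth b a) 1?eq_sym // mulr0 subr0 => /eqP.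
  by rewrite mulf_eq0 (negbTE cb) /= eq_sym.
have uv : dot u v = 0.
  by rewrite /v dotvC dotvBl !dotvZl (dotvC (us a)) (dotvC (us b)) mulrC subrr.
have S : \sum_(l < r) (c l u * dot v (us l)) *: us l = dot u u ^+ 2 *: v.
  transitivity (\sum_(l < r) (c b u * (c l u * dot (us a) (us l))) *: us l
              - \sum_(l < r) (c a u * (c l u * dot (us b) (us l))) *: us l).
    rewrite -sumrB; apply: eq_bigr => l _; rewrite -scalerBl /v dotvBl !dotvZl.
    by congr (_ *: _); ring.
  rewrite (sum_only_at a) => [|l la]; last by rewrite us_orth 1?eq_sym // !mulr0 scale0r.
  rewrite (sum_only_at b) => [|l lb]; last by rewrite us_orth 1?eq_sym // !mulr0 scale0r.
  rewrite /v scalerBr !scalerA; congr (_ *: _ - _ *: _);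
    by [rewrite -(Ec a ca); ring | rewrite -(Ec b cb); ring].
rewrite /hess_g uv S mulr0 scale0r add0r scalerA -scalerBl; congr (_ *: _); ring.
Qed.

Lemma hessian_g_poly_neg_eigenvalue u : (forall l, us l != 0) ->
  grad_g us u = 0 -> (2 <= supp_count us u)%N ->
  exists2 a, a < 0 & eigenvalue (hessian (g_poly us) u) a.
Proof.
move=> us0 crit /supp_count_ge2 [a [b [ab ca cb]]].
have [v0 Hv] := hess_g_saddle_direction crit (us0 a) ab ca cb.
have u0 : u != 0 by apply: contraNneq ca => ->; rewrite /coef_us dotv0l.
exists (- 6 * dot u u ^+ 2).
  by rewrite mulNr oppr_lt0 mulr_gt0 ?exprn_gt0 ?dotvv_gt0.
apply/eigenvalueP; exists (c b u *: us a - c a u *: us b) => //.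
by rewrite mulmx_hessian_g_poly.
Qed.

Lemma deriv3_g_poly0_neq0 : (0 < r)%N -> (forall l, us l != 0) ->
  deriv3 (g_poly us) 0 <> (fun _ _ _ => 0).
Proof.
move=> r_gt0 us0 D0; pose m := Ordinal r_gt0.
have T0 i j k : Tstar us i j k = 0.
  have /eqP := congr1 (fun T => T i j k) D0.
  by rewrite /= deriv3_g_poly0 mulf_eq0 oppr_eq0 pnatr_eq0 => /eqP.
have : tdot (outer3 (us m) (us m) (us m)) (Tstar us) = dot (us m) (us m) ^+ 3.
  rewrite [Tstar us]/Tstar tdot_sumr (sum_only_at m) => [|l lm]; last first.
    by rewrite tdot_outer3 us_orth 1?eq_sym // !mulr0.
  by rewrite tdot_outer3 -expr2 -exprSr.
rewrite /tdot big1 => [|i _]; last first.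
  by rewrite big1 // => j _; rewrite big1 // => k _; rewrite T0 mulr0.
by move/esym/eqP; rewrite expf_eq0 /= dotvv_eq0; exact/negP/us0.
Qed.

Lemma g_poly_us m :
  g_poly us (us m) = - dot (us m) (us m) ^+ 3 + frob2 (Tstar us).
Proof.
rewrite /g_poly (sum_only_at m) => [|l lm]; last by rewrite coef_us_us // expr0n.
by rewrite /coef_us; ring.
Qed.

Lemma g_poly_orth_decomp m (s : R) w : dot w (us m) = 0 ->
  let A := dot (us m) (us m) in let q := dot w w in
  g_poly us (s *: us m + w) - g_poly us (us m) =
  A ^+ 3 * (s ^+ 3 - 1) ^+ 2 + 3 * s ^+ 4 * A ^+ 2 * q + 3 * s ^+ 2 * A * q ^+ 2
  + q ^+ 3 - 2 * \sum_(l < r | l != m) dot w (us l) ^+ 3.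
Proof.
move=> wm A q.
have cm : c m (s *: us m + w) = s * A by rewrite /coef_us dotvDl dotvZl wm addr0.
have cl l : l != m -> c l (s *: us m + w) = dot w (us l).
  by move=> lm; rewrite /coef_us dotvDl dotvZl us_orth 1?eq_sym // mulr0 add0r.
have N : dot (s *: us m + w) (s *: us m + w) = s ^+ 2 * A + q.
  rewrite dotvDl !dotvDr !dotvZl !dotvZr (dotvC (us m) w) wm.
  by rewrite /A /q; ring.
rewrite g_poly_us /g_poly (bigD1 m) //= cm N -/A.
rewrite (eq_bigr (fun l => dot w (us l) ^+ 3)) => [|l /cl -> //].
ring.
Qed.

Lemma sum_dotvv_us_gt0 m : us m != 0 -> 0 < \sum_(l < r) dot (us l) (us l).
Proof.
move=> um0; rewrite (bigD1 m) //=; apply: ltr_wpDr; last exact: dotvv_gt0.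
by apply: sumr_ge0 => l _; exact: dotvv_ge0.
Qed.

Lemma sum_dotv_us_cube_le (P : pred 'I_r) w eta : 0 <= eta ->
  (forall l, P l -> `|dot w (us l)| <= eta) ->
  \sum_(l < r | P l) dot w (us l) ^+ 3
    <= eta * (dot w w * \sum_(l < r) dot (us l) (us l)).
Proof.
move=> eta0 wle; apply: le_trans (sum_cube_le wle) _; rewrite ler_wpM2l //.
apply: le_trans (_ : _ <= \sum_(l < r | P l) dot w w * dot (us l) (us l)) _.
  by apply: ler_sum => l _; exact: cauchy_schwarz_dotv.
rewrite -mulr_sumr ler_wpM2l ?dotvv_ge0 // [X in _ <= X](bigID P) /= lerDl.
by apply: sumr_ge0 => l _; exact: dotvv_ge0.
Qed.

(* For [s > 1/2], i.e. [s^4 >= 1/16], the bound [A^2 / (16 M)] makes the cubic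
   remainder of [g_poly_orth_decomp] at most [2/3] of its [3 s^4 A^2 |w|^2] term. *)
Lemma g_poly_lt_near_us m u : us m != 0 -> u != us m ->
  let A := dot (us m) (us m) in let M := \sum_(l < r) dot (us l) (us l) in
  A / 2 < c m u -> (forall l, l != m -> `|c l u| <= A ^+ 2 / (16 * M)) ->
  g_poly us (us m) < g_poly us u.
Proof.
move=> um0 uum A M cmu clu.
have A0 : 0 < A := dotvv_gt0 um0.
have M0 : 0 < M := sum_dotvv_us_gt0 um0.
pose s := c m u / A; pose w := u - s *: us m; pose q := dot w w.
have uE : u = s *: us m + w by rewrite /w addrC subrK.
have wm : dot w (us m) = 0 by rewrite /w dotvBl dotvZl /s divfK ?gt_eqF ?subrr.
have X_le : \sum_(l < r | l != m) dot w (us l) ^+ 3 <= q * A ^+ 2 / 16.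
  have eta0 : 0 <= A ^+ 2 / (16 * M) by rewrite divr_ge0 ?mulr_ge0 ?sqr_ge0 ?ltW.
  apply: le_trans (sum_dotv_us_cube_le eta0 _) _ => [l lm|].
    by rewrite /w dotvBl dotvZl (@us_orth m l) 1?eq_sym // mulr0 subr0 clu.
  by rewrite -/M -/q le_eqVlt; apply/orP; left; apply/eqP; field; rewrite gt_eqF.
have s_gt : 1 / 2 < s by rewrite /s ltr_pdivlMr //; lra.
have s4 : 1 / 16 <= s ^+ 4.
  have : (1 / 2) ^+ 4 <= s ^+ 4 by rewrite lerXn2r // ?nnegrE; lra.
  by congr (_ <= _); field.
rewrite -subr_gt0 uE (g_poly_orth_decomp _ wm) -/A -/q.
have q0 : 0 <= q := dotvv_ge0 w.
have P : 0 < A ^+ 3 * (s ^+ 3 - 1) ^+ 2 + q * A ^+ 2 / 16.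
  have [q_gt0|] := ltrP 0 q.
    apply: ltr_wpDl; first by rewrite mulr_ge0 ?sqr_ge0 ?exprn_ge0 ?ltW.
    by rewrite divr_gt0 ?mulr_gt0 ?exprn_gt0.
  move=> q_le0; have q_eq0 : q = 0 by apply/le_anti; rewrite q_le0 q0.
  have w0 : w = 0 by apply/eqP; rewrite -dotvv_eq0 -/q q_eq0.
  rewrite q_eq0 mul0r mul0r addr0 pmulr_rgt0; last exact: exprn_gt0.
  rewrite lt0r sqr_ge0 andbT sqrf_eq0 subr_eq0.
  apply: contra_neq uum => s3; rewrite uE w0 addr0.
  have -> : s = 1 by apply: (@exprn_odd_inj _ 3) => //; rewrite s3 expr1n.
  by rewrite scale1r.
have qA : 0 <= q * A ^+ 2 by rewrite mulr_ge0 ?sqr_ge0.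
have t4 : q * A ^+ 2 / 16 <= q * A ^+ 2 * s ^+ 4 by nra.
have : 0 <= 3 * s ^+ 2 * A * q ^+ 2 + q ^+ 3.
  apply: addr_ge0; last exact: exprn_ge0.
  apply: mulr_ge0; last exact: sqr_ge0.
  apply: mulr_ge0; last exact: ltW.
  by apply: mulr_ge0; [exact: ler0n | exact: sqr_ge0].
lra.
Qed.

Lemma coef_us_continuous l : continuous (c l).
Proof.
move=> x; apply: differentiable_continuous.
have -> : c l = \sum_(i < n) (fun y : V => y 0 i * us l 0 i).
  by apply/funext => y; rewrite fct_sumE.
apply: differentiable_sum => i.
apply: (@differentiableM _ _ (fun y : V => y 0 i) (cst (us l 0 i))).
  exact: differentiable_coord.
exact: differentiable_cst.
Qed.

Lemma strict_local_min_us m : us m != 0 -> strict_local_min (g_poly us) (us m).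
Proof.
move=> um0; rewrite /strict_local_min.
set A := dot (us m) (us m); set M := \sum_(l < r) dot (us l) (us l).
have A0 : 0 < A := dotvv_gt0 um0.
have M0 : 0 < M := sum_dotvv_us_gt0 um0.
have eta0 : 0 < A ^+ 2 / (16 * M) by rewrite divr_gt0 ?mulr_gt0 ?exprn_gt0.
near=> u => uum; apply: g_poly_lt_near_us => //.
  near: u; apply: (cvgr_gt _ (@coef_us_continuous m (us m))).
  by rewrite /coef_us -/A; lra.
near: u; apply: filter_forall => l.
apply: filterS (cvgr_distC_lt _ _ (@coef_us_continuous l (us m)) _ eta0) => y + lm.
by rewrite coef_us_us // subr0 => /ltW.
Unshelve. all: by end_near.
Qed.

End CriticalPoints.
Unset Implicit Arguments.

Theorem theorem2 (R : realType) (n r : nat) (us : 'I_r -> 'rV[R]_n)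
  (hr : (0 < r)%N)
  (hnz : forall l, us l != 0)
  (horth : forall l m, l != m -> dotv (us l) (us m) = 0) :
  let g := gobj us in
  (forall u, critical g u -> in_span us u) /\
  [/\ (* (1) *)
      (forall u, critical g u -> supp_count us u = 0%N -> u = 0),
      [/\ grad g 0 = 0, hessian g 0 = 0 & deriv3 g 0 <> (fun _ _ _ => 0)],
      (* (2) *)
      (forall u, critical g u -> supp_count us u = 1%N -> exists l, u = us l),
      (forall l, [/\ critical g (us l), posdef (hessian g (us l))
                   & strict_local_min g (us l)]) &
      (* (3) *)
      (forall u, critical g u -> (2 <= supp_count us u)%N ->
         exists2 a : R, a < 0 & eigenvalue (hessian g u) a)].
Proof.
rewrite /= gobj_poly /critical !grad_g_polyE; split=> [u|].
  by rewrite grad_g_polyE; exact: critical_in_span.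
split=> [u||u|l|u]; rewrite ?grad_g_polyE.
- exact: critical_supp_count0.
- by split; [rewrite grad_g0 | exact: hessian_g_poly0 | exact: deriv3_g_poly0_neq0].
- exact: critical_supp_count1.
- by split; [exact: critical_us | exact: posdef_hessian_us | exact: strict_local_min_us].
- exact: hessian_g_poly_neg_eigenvalue.
Qed.
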